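(* Consider natural gradient descent with the layer-wise metric $G_{\mathrm{layer},t}$ built from a constant symmetric positive definite $\Sigma\in\mathbb{R}^{L\times L}$, and let $\alpha=1_L^\top\Sigma^{-1}1_L$. If the learning rate is $\eta=c/\alpha$ with $0<c<2$, then the asymptotic (infinite-width) training dynamics converge to the global minimum: on the training inputs they are $f_t(x)=y+(1-c)^t(f_0(x)-y)$, which tends to $y$ as $t\to\infty$. In particular, for $c=1$ the dynamics reach $f_t(x)=y$ after one iteration.
   Context: Network: for $l=1,\dots,L$, $u_l=\frac{\sigma_w}{\sqrt{M_{l-1}}}W_lh_{l-1}+\sigma_b b_l$, $h_l=\phi(u_l)$, $h_0=x\in\mathbb{R}^{M_0}$; hidden widths $M_l=\alpha_lM$ ($l<L$), $M_L=C$; output $f_\theta=u_L$; $\theta_l$ = parameters of layer $l$; i.i.d. $\mathcal{N}(0,1)$ initialization of all weights and biases; $\phi$ locally Lipschitz, non-polynomial, with $\phi'$ locally Lipschitz; training inputs with $\|x_n\|_2=1$, pairwise distinct; MSE loss $\mathcal{L}(\theta)=\frac1{2N}\sum_n\|y_n-f_\theta(x_n)\|^2$. $f_t(x),y\in\mathbb{R}^{CN}$ are the concatenations over training samples. NGD: $\theta_{t+1}=\theta_t-\eta G_t^{-1}\nabla_\theta\mathcal{L}(\theta_t)$ in the zero-damping limit $\rho\to0^+$, with $G_{\mathrm{layer},t}=\frac1N S_t^\top(\Sigma\otimes I_{CN})S_t+\rho I$, $S_t$ block diagonal with blocks $\nabla_{\theta_l}f_t(x)$, $l=1,\dots,L$.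 The ''asymptotic dynamics'' are those to which the NGD outputs $f_t$ are uniformly-in-$t$ close with high probability as the width $M\to\infty$, namely $f_t(x')=\bar\Theta(x',x)\bar\Theta^{-1}(I-(I-\eta\bar\Theta)^t)(y-f_0(x))+f_0(x')$ with $\bar\Theta(x',x)=J_0(x')G_0^{-1}J_0(x)^\top/N$, $J_0=\nabla_\theta f_0$, $\bar\Theta=\bar\Theta(x,x)=\alpha I$. *)

From HB Require Import structures.
From mathcomp Require Import all_boot all_order all_algebra.
From mathcomp Require Import all_classical all_reals all_analysis.
Set Implicit Arguments. Unset Strict Implicit. Unset Printing Implicit Defensive.
Import Order.TTheory GRing.Theory Num.Theory.
Local Open Scope ring_scope.

Definition spd (R : realType) (n : nat) (S : 'M[R]_n) : Prop :=
  S^T = S /\ forall v : 'cV[R]_n, v != 0 -> 0 < (v^T *m S *m v) 0 0.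

Definition ngd_alpha (R : realType) (L : nat) (Sigma : 'M[R]_L) : R :=
  ((const_mx 1 : 'rV[R]_L) *m invmx Sigma *m (const_mx 1 : 'cV[R]_L)) 0 0.

(* Asymptotic NGD dynamics evaluated at a set of test inputs x' (K' outputs):
   f_t(x') = Theta(x',x) Theta^{-1} (I - (I - eta Theta)^t) (y - f_0(x)) + f_0(x')
   where Theta = Theta(x,x) is the K x K (K = C N) limiting kernel on the
   training inputs, y, f_0(x) are the concatenated targets / initial outputs. *)
Definition asym_dyn (R : realType) (K K' : nat)
  (Theta_x'x : 'M[R]_(K', K)) (Theta : 'M[R]_K) (eta : R)
  (y f0x : 'cV[R]_K) (f0x' : 'cV[R]_K') (t : nat) : 'cV[R]_K' :=
  Theta_x'x *m invmx Theta *m (1%:M - (1%:M - eta *: Theta) ^+ t) *m (y - f0x)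
  + f0x'.

Definition asym_dyn_train (R : realType) (K : nat) (Theta : 'M[R]_K) (eta : R)
  (y f0 : 'cV[R]_K) (t : nat) : 'cV[R]_K :=
  asym_dyn Theta Theta eta y f0 f0 t.

(** With the layer-wise metric the limiting kernel on the training inputs is the
    scalar matrix [alpha * I], so the asymptotic NGD update is the scalar
    recursion [f_(t+1) - y = (1 - eta alpha) (f_t - y)].  With [eta = c / alpha]
    the error is multiplied by [1 - c] at every step; [0 < c < 2] makes
    [|1 - c| < 1], and [alpha > 0] because it is the value of the positive
    definite form of [Sigma^-1] at the nonzero vector [1_L]. *)

From HB Require Import structures.
From mathcomp Require Import all_boot all_order all_algebra.
From mathcomp Require Import all_classical all_reals all_analysis.
From mathcomp Require Import lra.
Import Order.TTheory GRing.Theory Num.Theory.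
Local Open Scope classical_set_scope.
Local Open Scope ring_scope.

Section PositiveDefinite.
Context {R : realType} {n : nat} {S : 'M[R]_n}.
Hypothesis S_pd : forall v : 'cV[R]_n, v != 0 -> 0 < (v^T *m S *m v) 0 0.

Lemma pd_unitmx : S \in unitmx.
Proof.
rewrite -row_free_unit; apply: inj_row_free => v vS0.
apply/eqP; apply: contraT => v_neq0.
have vT_neq0 : v^T != 0 by rewrite -(inj_eq (@trmx_inj _ _ _)) trmxK trmx0.
by have := S_pd _ vT_neq0; rewrite trmxK vS0 mul0mx mxE ltxx.
Qed.

(* With [w := S^-1 u^T], [w^T S w = w^T u^T = u S^-1 u^T]. *)
Lemma invmx_pd (u : 'rV[R]_n) : u != 0 -> 0 < (u *m invmx S *m u^T) 0 0.
Proof.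
move=> u_neq0; set w := invmx S *m u^T.
have Sw : S *m w = u^T by rewrite mulmxA mulmxV ?pd_unitmx ?mul1mx.
have w_neq0 : w != 0.
  apply: contraNneq u_neq0 => w0.
  by rewrite -[u]trmxK -Sw w0 mulmx0 trmx0.
have := S_pd _ w_neq0; rewrite -mulmxA Sw -[u]trmxK -trmx_mul mxE trmxK.
by rewrite mulmxA.
Qed.

End PositiveDefinite.

Lemma ngd_alpha_gt0 (R : realType) (L : nat) (Sigma : 'M[R]_L) :
  (0 < L)%N -> spd Sigma -> 0 < ngd_alpha Sigma.
Proof.
move=> L_gt0 [_ Sigma_pd].
have one_neq0 : (const_mx 1 : 'rV[R]_L) != 0.
  apply/eqP => /matrixP /(_ 0 (Ordinal L_gt0)); rewrite !mxE.
  by move/eqP; rewrite oner_eq0.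
have := invmx_pd Sigma_pd _ one_neq0.
by rewrite /ngd_alpha trmx_const.
Qed.

Lemma scalar_mxX (R : pzRingType) (n : nat) (a : R) (t : nat) :
  (a%:M : 'M[R]_n) ^+ t = (a ^+ t)%:M.
Proof.
elim: t => [|t IH]; first by rewrite !expr0.
by rewrite !exprS IH -mulmxE -scalar_mxM.
Qed.

Lemma asym_dyn_train_scalar (R : realType) (K : nat) (a eta : R)
    (y f0 : 'cV[R]_K) (t : nat) :
  a != 0 ->
  asym_dyn_train a%:M eta y f0 t = y + (1 - eta * a) ^+ t *: (f0 - y).
Proof.
move=> a_neq0; rewrite /asym_dyn_train /asym_dyn invmx_scalar.
rewrite scale_scalar_mx -raddfB /= scalar_mxX -raddfB /= -!scalar_mxM.
rewrite !mul_scalar_mx divff // mul1r scalerBl scale1r.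
by rewrite -scalerN opprB addrAC subrK.
Qed.

Lemma cvg_geometric_shift (R : archiRealFieldType) (u d r : R) :
  `|r| < 1 -> (fun t : nat => u + r ^+ t * d : R^o) @ \oo --> (u : R^o).
Proof.
move=> r_lt1; rewrite -[X in _ --> X]addr0.
apply: cvgD; first exact: cvg_cst.
rewrite -(mul0r d); apply: cvgMl; exact: cvg_expr.
Qed.

Theorem corollary4p2 (R : realType) (L C N : nat) (Sigma : 'M[R]_L)
  (Theta : 'M[R]_(C * N)) (y f0 : 'cV[R]_(C * N)) (c : R) :
  (0 < L)%N ->
  spd Sigma ->
  Theta = (ngd_alpha Sigma)%:M ->
  0 < c -> c < 2 ->
  let eta := c / ngd_alpha Sigma in
  (forall t : nat,
     asym_dyn_train Theta eta y f0 t = y + (1 - c) ^+ t *: (f0 - y))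
  /\ (forall i j, (fun t : nat => asym_dyn_train Theta eta y f0 t i j : R^o) @ \oo --> (y i j : R^o))
  /\ (c = 1 -> asym_dyn_train Theta eta y f0 1 = y).
Proof.
move=> L_gt0 Sigma_spd -> c_gt0 c_lt2 eta.
have alpha_neq0 : ngd_alpha Sigma != 0 by rewrite gt_eqF ?ngd_alpha_gt0.
have dyn t : asym_dyn_train (ngd_alpha Sigma)%:M eta y f0 t
             = y + (1 - c) ^+ t *: (f0 - y).
  by rewrite asym_dyn_train_scalar // mulfVK.
split=> //; split=> [i j|c_eq1].
- have -> : (fun t => asym_dyn_train (ngd_alpha Sigma)%:M eta y f0 t i j : R^o)
            = (fun t => y i j + (1 - c) ^+ t * (f0 - y) i j).
    by apply: funext => t; rewrite dyn !mxE.
  by apply: cvg_geometric_shift; rewrite ltr_norml; apply/andP; split; lra.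
- by rewrite dyn c_eq1 subrr expr1 scale0r addr0.
Qed.
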